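(* Let $\varkappa_+,\varkappa_-$ be nonnegative integers with $N=\varkappa_++\varkappa_-\ge1$, and let $x\in\mathbb{C}\setminus\mathbb{Z}$. Then $$\sum_{(c'_1,\dots,c'_N)}\ \prod_{i=1}^{N}\frac{1}{x+c'_i}=\frac{\binom{\varkappa_++\varkappa_-}{\varkappa_+}}{\prod_{i=1}^{\varkappa_+}(x+i)\prod_{j=1}^{\varkappa_-}(x-j)},$$ where the sum runs over all integer sequences $(c'_1,\dots,c'_N)$ such that, with $c'_0=0$, $|c'_{i+1}-c'_i|=1$ for $i=0,\dots,N-1$ and $c'_N=\varkappa_+-\varkappa_-$. *)

From HB Require Import structures.
From mathcomp Require Import all_boot all_order all_algebra.
From mathcomp Require Import complex.
From mathcomp Require Import reals.
Set Implicit Arguments. Unset Strict Implicit. Unset Printing Implicit Defensive.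
Import Order.TTheory GRing.Theory Num.Theory.
Local Open Scope ring_scope.

(* A path of length N with unit steps is encoded by its step vector
   s : {ffun 'I_N -> bool} (true = +1, false = -1).
   [pathpos s i] is c'_i = sum of the first i steps, so c'_0 = 0 and
   |c'_{i+1} - c'_i| = 1; this is a bijection between step vectors and
   integer sequences (c'_1,...,c'_N) with c'_0 = 0 and unit steps. *)
Definition pathpos (N : nat) (s : {ffun 'I_N -> bool}) (i : nat) : int :=
  \sum_(j < N | (j < i)%N) (if s j then 1 else -1).

From HB Require Import structures.
From mathcomp Require Import all_boot all_order all_algebra.
From mathcomp Require Import complex reals.
From mathcomp Require Import ring zify.
Set Implicit Arguments. Unset Strict Implicit. Unset Printing Implicit Defensive.
Import Order.TTheory GRing.Theory Num.Theory.
Local Open Scope ring_scope.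

(* For a field F and a point x with x + k <> 0 for every
   integer k, let W n e be the sum, over the unit-step walks of length n
   from 0 to e, of prod_{i=1}^n 1/(x + c_i), where c_i is the position of
   the walk after i steps.  Splitting off the last step (which must end at
   e and come from e - 1 or e + 1) gives the recursion
       W (n+1) e = (x + e)^-1 * (W n (e - 1) + W n (e + 1)),
   with W 0 0 = 1 and W n e = 0 when |e| > n.  The closed form
       W (p + m) (p - m) = C(p+m, p) / (prod_{i=1}^p (x+i) prod_{j=1}^m (x-j))
   then follows by induction on p + m: at the boundary (p = 0 or m = 0)
   only one predecessor is reachable, and in the interior the two terms
   combine by a partial-fraction identity together with
   (p+1) C(n, p+1) = (m+1) C(n, p) for n = p + m + 1.
   The file first studies step vectors (appending a step, position bounds),
   then the field identities, then W, and derives the theorem at the end. *)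

Section StepVectors.
Variable n : nat.

Definition append_step (bg : bool * {ffun 'I_n -> bool}) : {ffun 'I_n.+1 -> bool} :=
  [ffun i : 'I_n.+1 => if unlift ord_max i is Some j then bg.2 j else bg.1].

Definition drop_last_step (s : {ffun 'I_n.+1 -> bool}) : bool * {ffun 'I_n -> bool} :=
  (s ord_max, [ffun j : 'I_n => s (lift ord_max j)]).

Lemma append_step_bij : bijective append_step.
Proof.
exists drop_last_step.
  case=> b g; rewrite /drop_last_step /append_step /= ffunE unlift_none.
  by congr pair; apply/ffunP=> j; rewrite !ffunE liftK.
move=> s; apply/ffunP=> i; rewrite /drop_last_step /append_step ffunE /=.
by case: unliftP => [j ->|->]; rewrite ?ffunE.
Qed.

Lemma append_step_widen b g (j : 'I_n) (le_n : (n <= n.+1)%N) :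
  append_step (b, g) (widen_ord le_n j) = g j.
Proof.
have -> : widen_ord le_n j = lift ord_max j.
  by apply/val_inj; rewrite /= /bump leqNgt ltn_ord.
by rewrite ffunE liftK.
Qed.

Lemma pathpos_append_prefix b (g : {ffun 'I_n -> bool}) k :
  (k <= n)%N -> pathpos (append_step (b, g)) k = pathpos g k.
Proof.
move=> le_kn; rewrite /pathpos !(big_mkcond (fun j : 'I_ _ => (j < k)%N)).
rewrite big_ord_recr /= ltnNge le_kn addr0.
by apply: eq_bigr => j _; rewrite append_step_widen.
Qed.

Lemma pathpos_append_last b (g : {ffun 'I_n -> bool}) :
  pathpos (append_step (b, g)) n.+1 = pathpos g n + (if b then 1 else -1).
Proof.
rewrite /pathpos !(big_mkcond (fun j : 'I_ _ => (j < _)%N)) big_ord_recr /= ltnSn.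
congr (_ + _).
  by apply: eq_bigr => j _; rewrite append_step_widen (ltn_ord j) ltnS ltnW.
by rewrite ffunE unlift_none.
Qed.

Lemma pathpos_bounds (g : {ffun 'I_n -> bool}) k :
  (- (n%:Z) <= pathpos g k <= n%:Z)%R.
Proof.
rewrite /pathpos big_mkcond; apply/andP; split.
  have -> : - (n%:Z) = \sum_(j < n) (-1 : int) by rewrite sumr_const card_ord; lia.
  by apply: ler_sum => j _; case: (_ < _)%N; case: (g j).
have -> : n%:Z = \sum_(j < n) (1 : int) by rewrite sumr_const card_ord; lia.
by apply: ler_sum => j _; case: (_ < _)%N; case: (g j).
Qed.

End StepVectors.

Lemma partial_fraction_merge (F : fieldType) (x a c1 c2 P M : F) :
  a != 0 -> x + P != 0 -> x - M != 0 -> x + (P - M) != 0 ->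
  P * c2 = M * c1 ->
  (x + (P - M))^-1 * (c1 / (a * (x - M)) + c2 / (a * (x + P))) =
  (c2 + c1) / (a * (x - M) * (x + P)).
Proof.
move=> a_neq0 xP_neq0 xM_neq0 xPM_neq0 residues.
have numer : c1 * (x + P) + c2 * (x - M) = (c2 + c1) * (x + (P - M)).
  transitivity ((c2 + c1) * (x + (P - M)) + (M * c1 - P * c2)); first by ring.
  by rewrite residues subrr addr0.
transitivity ((x + (P - M))^-1 *
    ((c1 * (x + P) + c2 * (x - M)) / (a * (x - M) * (x + P)))).
  by congr (_ * _); field; rewrite a_neq0 xM_neq0 xP_neq0.
by rewrite numer; field; rewrite a_neq0 xM_neq0 xP_neq0 xPM_neq0.
Qed.

Lemma binomial_residues p m :
  (p.+1 * 'C(p + m.+1, p.+1) = m.+1 * 'C(p + m.+1, p))%N.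
Proof. by rewrite mul_bin_left; congr (_ * _)%N; lia. Qed.

Section WalkSums.
Variables (F : fieldType) (x : F).
Hypothesis x_off_integers : forall z : int, x != z%:~R.

Definition walk_sum n (e : int) : F :=
  \sum_(g : {ffun 'I_n -> bool} | pathpos g n == e)
     \prod_(i < n) (x + (pathpos g i.+1)%:~R)^-1.

Definition shifted_factorials p m : F :=
  (\prod_(i < p) (x + (i.+1)%:R)) * (\prod_(j < m) (x - (j.+1)%:R)).

Lemma shift_int_neq0 (k : int) : x + k%:~R != 0.
Proof. by apply: contra (x_off_integers (- k)); rewrite addr_eq0 mulrNz. Qed.

Lemma shift_nat_neq0 (k : nat) : x + k%:R != 0.
Proof. exact: (shift_int_neq0 k). Qed.

Lemma shift_negnat_neq0 (k : nat) : x - k%:R != 0.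
Proof. by have := shift_int_neq0 (- (k%:Z)); rewrite mulrNz. Qed.

Lemma shifted_factorials_neq0 p m : shifted_factorials p m != 0.
Proof.
rewrite mulf_neq0 //; apply/prodf_neq0 => i _.
  exact: shift_nat_neq0.
exact: shift_negnat_neq0.
Qed.

Lemma shifted_factorialsSp p m :
  shifted_factorials p.+1 m = shifted_factorials p m * (x + p.+1%:R).
Proof. by rewrite /shifted_factorials big_ord_recr /= mulrAC. Qed.

Lemma shifted_factorialsSm p m :
  shifted_factorials p m.+1 = shifted_factorials p m * (x - m.+1%:R).
Proof. by rewrite /shifted_factorials big_ord_recr /= mulrA. Qed.

Lemma walk_sum0 : walk_sum 0 0 = 1.
Proof.
rewrite /walk_sum (eq_bigl xpredT); last by move=> g; rewrite /pathpos big_ord0.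
rewrite (eq_bigr (fun _ => 1)); last by move=> g _; rewrite big_ord0.
by rewrite sumr_const card_ffun card_ord.
Qed.

Lemma walk_sum_last_step n e :
  walk_sum n.+1 e = (x + e%:~R)^-1 * (walk_sum n (e - 1) + walk_sum n (e + 1)).
Proof.
rewrite /walk_sum (reindex (@append_step n)); last first.
  exact/onW_bij/append_step_bij.
rewrite (eq_bigr (fun bg => (x + e%:~R)^-1 *
    \prod_(i < n) (x + (pathpos bg.2 i.+1)%:~R)^-1)); last first.
  case=> b g /eqP end_e; rewrite big_ord_recr /= end_e mulrC; congr (_ * _).
  by apply: eq_bigr => i _; rewrite pathpos_append_prefix.
rewrite -big_distrr /=; congr (_ * _).
transitivity (\sum_(b : bool) \sum_(g : {ffun 'I_n -> bool})
    (if pathpos (append_step (b, g)) n.+1 == e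
     then \prod_(i < n) (x + (pathpos g i.+1)%:~R)^-1 else 0)).
  by rewrite pair_bigA big_mkcond.
rewrite big_bool /=.
congr (_ + _); rewrite [RHS]big_mkcond; apply: eq_bigr => g _;
  rewrite pathpos_append_last /=.
  by rewrite -(inj_eq (addIr (-1))) addrK.
by rewrite -(inj_eq (addIr 1)) addrNK.
Qed.

Lemma walk_sum_out_of_range n e :
  (e < - (n%:Z))%R \/ (n%:Z < e)%R -> walk_sum n e = 0.
Proof.
move=> far; rewrite /walk_sum big_pred0 // => g; apply/negbTE/eqP => end_e.
by move: (pathpos_bounds g n); rewrite end_e => /andP[]; lia.
Qed.

Lemma walk_sum_closed_form p m :
  walk_sum (p + m) (p%:Z - m%:Z) = 'C(p + m, p)%:R / shifted_factorials p m.
Proof.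
move def_n: (p + m)%N => n; elim: n p m def_n => [|n IH] p m def_n.
  case: p m def_n => [|//] [|//] _.
  by rewrite walk_sum0 /shifted_factorials !big_ord0 mulr1 bin0 divr1.
rewrite walk_sum_last_step.
case: p def_n => [|p]; case: m => [|m] //= def_n.
- (* m = n + 1: the walk only steps down, its predecessor ends at -n. *)
  move: def_n => [->].
  rewrite [walk_sum n _](walk_sum_out_of_range (n := n)); last by left; lia.
  have -> : 0%:Z - n.+1%:Z + 1 = 0%:Z - n%:Z by lia.
  rewrite IH // shifted_factorialsSm !bin0 add0r.
  have -> : x + (- (n.+1%:Z))%:~R = x - n.+1%:R by rewrite mulrNz.
  by field; rewrite -mulrS shift_negnat_neq0 shifted_factorials_neq0.
- (* p = n + 1: the walk only steps up, its predecessor ends at n. *)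
  move: def_n; rewrite addn0 => -[->].
  rewrite [walk_sum n (_ + 1)](walk_sum_out_of_range (n := n)); last by right; lia.
  have -> : n.+1%:Z - 0%:Z - 1 = n%:Z - 0%:Z by lia.
  rewrite IH ?addn0 // shifted_factorialsSp !binn addr0.
  by field; rewrite -mulrS shift_nat_neq0 shifted_factorials_neq0.
-
  have len_down : (p + m.+1)%N = n by lia.
  have len_up : (p.+1 + m)%N = n by lia.
  have -> : p.+1%:Z - m.+1%:Z - 1 = p%:Z - m.+1%:Z by lia.
  have -> : p.+1%:Z - m.+1%:Z + 1 = p.+1%:Z - m%:Z by lia.
  rewrite !IH //.
  rewrite (shifted_factorialsSp p m.+1) (shifted_factorialsSm p m).
  rewrite (shifted_factorialsSp p m) binS natrD mulrzBr.
  apply: partial_fraction_merge;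
    rewrite ?shifted_factorials_neq0 ?shift_nat_neq0 ?shift_negnat_neq0 //.
    by have := shift_int_neq0 (p.+1%:Z - m.+1%:Z); rewrite mulrzBr.
  by rewrite -!natrM -len_down binomial_residues.
Qed.

End WalkSums.

Local Open Scope complex_scope.

(* The theorem is the closed form of W at length kp + km and endpoint
   kp - km, specialised to the complex field over a real field; the closed
   form also holds for the empty walk. *)
Theorem mainTheorem11 (R : realType) (kp km : nat) (x : R[i])
  (hN : (1 <= kp + km)%N)
  (hx : forall z : int, x != z%:~R) :
  \sum_(s : {ffun 'I_(kp + km) -> bool} |
          pathpos s (kp + km) == (kp%:Z - km%:Z))
     \prod_(i < kp + km) (x + (pathpos s i.+1)%:~R)^-1
  = ('C(kp + km, kp))%:R /
      ((\prod_(i < kp) (x + (i.+1)%:R)) * (\prod_(j < km) (x - (j.+1)%:R))).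
Proof. exact: (walk_sum_closed_form hx kp km). Qed.
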